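(* Let $V$ be any finite set of points in $\mathbb{R}^m$ with $|V|\ge 2$, and let $T$ be any tree produced by the bisecting $k$-means algorithm on $V$. Then $T$ is a constant-factor approximation for the Hierarchical-Revenue objective: there is an absolute constant $\gamma>0$ (one may take $\gamma=\tfrac{1}{35}$), independent of $V$ and $m$, such that $rev_T(V)\ \ge\ \gamma\cdot \max_{T'} rev_{T'}(V)$, where the maximum is over all hierarchical clustering trees $T'$ on $V$.
   Context: Distances are Euclidean: $d(x,y)=\|x-y\|_2$. For a finite nonempty $S\subset\mathbb{R}^m$, $\rho(S)=\frac{1}{|S|}\sum_{u\in S}u$ is its centroid and $\Delta_1(S)=\sum_{u\in S}d(u,\rho(S))^2$. A partition $(S_1,S_2)$ of a finite set $S$ ($|S|\ge2$) into two nonempty sets is an optimal 2-means partition if it minimizes $\Delta_1(S_1)+\Delta_1(S_2)$ over all such partitions. A hierarchical clustering tree $T$ on $V$ is a rooted binary tree (each internal node has exactly two children) whose leaves are in bijection with $V$; each node is identified with the set of points at the leaves of its subtree. If an internal node has set $S$ and its children have sets $S_1,S_2$, we call this a split and write $S\to(S_1,S_2)\in T$. The bisecting $k$-means algorithm builds $T$ top-down: starting from the root set $V$, every set $S$ with $|S|\ge 2$ is split into an optimal 2-means partition $(S_1,S_2)$ of $S$, recursively, until all sets are singletons. Revenue: for a split $S\to(S_1,S_2)$ and $i\in S_1$, $j\in S_2$, let $\delta_{S_1,S_2}(i,j)=\max\{d(i,\rho(S_1)),d(j,\rho(S_2))\}$ and $rev(i,j)=\min\{d(i,j)/\delta_{S_1,S_2}(i,j),\,1\}$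 (with $rev(i,j)=1$ if $\delta_{S_1,S_2}(i,j)=0$). Let $rev(S_1,S_2)=\sum_{i\in S_1}\sum_{j\in S_2}rev(i,j)$. The Hierarchical-Revenue of $T$ is $rev_T(V)=\sum_{S\to(S_1,S_2)\in T}rev(S_1,S_2)$, i.e. the sum over all unordered pairs $\{i,j\}\subseteq V$ of $rev(i,j)$ computed at the split where $i$ and $j$ are first separated. *)

From HB Require Import structures.
From mathcomp Require Import all_boot all_order all_algebra.
From mathcomp Require Import reals.
Set Implicit Arguments. Unset Strict Implicit. Unset Printing Implicit Defensive.
Import Order.TTheory GRing.Theory Num.Theory.
Local Open Scope ring_scope.

Section Defs.
Variables (R : realType) (m : nat).
Notation point := 'rV[R]_m.

Definition dist (x y : point) : R :=
  Num.sqrt (\sum_(k < m) (x ord0 k - y ord0 k) ^+ 2).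

(* A finite set of points is represented by a duplicate-free sequence;
   a subset of a finite set is a subsequence (up to permutation). *)
Definition centroid (S : seq point) : point :=
  (size S)%:R^-1 *: \sum_(u <- S) u.

Definition Delta1 (S : seq point) : R :=
  \sum_(u <- S) (dist u (centroid S)) ^+ 2.

Definition is_2partition (S S1 S2 : seq point) : Prop :=
  perm_eq (S1 ++ S2) S /\ S1 != [::] /\ S2 != [::].

Definition optimal_2means (S S1 S2 : seq point) : Prop :=
  is_2partition S S1 S2 /\
  forall A B : seq point, is_2partition S A B ->
    Delta1 S1 + Delta1 S2 <= Delta1 A + Delta1 B.

Inductive htree : Type :=
| Leaf of point
| Node of htree & htree.

Fixpoint leaves (t : htree) : seq point :=
  match t with
  | Leaf x => [:: x]
  | Node l r => leaves l ++ leaves r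
  end.

Definition is_hc_tree (V : seq point) (t : htree) : Prop :=
  perm_eq (leaves t) V.

(* every split S -> (S1,S2) of t is an optimal 2-means partition of S:
   t is a possible output of the bisecting k-means algorithm *)
Fixpoint bisecting_kmeans_tree (t : htree) : Prop :=
  match t with
  | Leaf _ => True
  | Node l r =>
      optimal_2means (leaves l ++ leaves r) (leaves l) (leaves r) /\
      bisecting_kmeans_tree l /\ bisecting_kmeans_tree r
  end.

Definition rev_pair (S1 S2 : seq point) (i j : point) : R :=
  let delta := Num.max (dist i (centroid S1)) (dist j (centroid S2)) in
  if delta == 0 then 1 else Num.min (dist i j / delta) 1.

Definition rev_split (S1 S2 : seq point) : R :=
  \sum_(i <- S1) \sum_(j <- S2) rev_pair S1 S2 i j.

Fixpoint hrev (t : htree) : R :=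
  match t with
  | Leaf _ => 0
  | Node l r => rev_split (leaves l) (leaves r) + hrev l + hrev r
  end.

End Defs.

(* Every pair of points is separated at exactly one split and earns revenue at
   most 1 there, so every tree has revenue at most n (n - 1) / 2.  Conversely we
   show that each split (S1, S2) made by bisecting k-means earns at least
   gamma (1 - 8 gamma / (1 + gamma)^2) |S1| |S2| for any 0 < gamma <= 1, which
   for gamma = 1/10 is 41/1210 > 1/35 of all pairs it separates.

   The per-split bound rests on one consequence of optimality: moving a part M
   of a cluster to the other cluster cannot lower the 2-means cost, which by the
   parallel axis theorem becomes an inequality between centroid distances.
   Taking M = {x} gives the Voronoi property d(x, c1) <= d(x, c2); taking M the
   points of S2 within gamma d(x, c1) of some x in S1 shows that at most a
   fraction 4 gamma / (1 + gamma)^2 of S2 is that close to x.  A pair (i, j)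
   earns at least gamma unless j is that close to i or i to j, whence the bound. *)

From HB Require Import structures.
From mathcomp Require Import all_boot all_order all_algebra.
From mathcomp Require Import reals.
From mathcomp Require Import ring lra.
Import Order.TTheory GRing.Theory Num.Theory.
Local Open Scope ring_scope.
Set Implicit Arguments. Unset Strict Implicit.

Section Euclid.
Variables (R : realType) (m : nat).
Notation point := 'rV[R]_m.

Definition sqdist (x y : point) : R := \sum_(k < m) (x ord0 k - y ord0 k) ^+ 2.

Lemma sqdist_ge0 (x y : point) : 0 <= sqdist x y.
Proof. by apply: sumr_ge0 => k _; rewrite sqr_ge0. Qed.

Lemma sqdistC (x y : point) : sqdist x y = sqdist y x.
Proof. by apply: eq_bigr => k _; rewrite -sqrrN opprB. Qed.

Lemma sqdistxx (x : point) : sqdist x x = 0.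
Proof. by rewrite /sqdist big1 // => k _; rewrite subrr expr0n. Qed.

Lemma dist_ge0 (x y : point) : 0 <= dist x y.
Proof. exact: sqrtr_ge0. Qed.

Lemma sqr_dist (x y : point) : dist x y ^+ 2 = sqdist x y.
Proof. by rewrite sqr_sqrtr // sqdist_ge0. Qed.

Lemma distC (x y : point) : dist x y = dist y x.
Proof. by rewrite /dist -/(sqdist x y) sqdistC. Qed.

Lemma dist_lt (x y : point) (r : R) : 0 <= r -> (dist x y < r) = (sqdist x y < r ^+ 2).
Proof.
by move=> r0; rewrite !ltNge -{1}(ger0_norm r0) -sqrtr_sqr ler_sqrt ?sqdist_ge0.
Qed.

Lemma sqr_le (u v : R) : 0 <= u -> u <= v -> u ^+ 2 <= v ^+ 2.
Proof. by move=> u0 uv; rewrite !expr2 ler_pM. Qed.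

(* Cauchy-Schwarz for finite sums, from Lagrange's identity. *)
Lemma cauchy_schwarz (f g : 'I_m -> R) :
  (\sum_k f k * g k) ^+ 2 <= (\sum_k f k ^+ 2) * (\sum_k g k ^+ 2).
Proof.
set F := \sum_k f k ^+ 2; set G := \sum_k g k ^+ 2; set C := \sum_k f k * g k.
have lagrange : \sum_i \sum_j (f i * g j - f j * g i) ^+ 2 = 2 * (F * G - C ^+ 2).
  rewrite (eq_bigr (fun i => f i ^+ 2 * G + g i ^+ 2 * F - 2 * (f i * g i) * C)).
    by rewrite sumrB big_split /= -!mulr_suml -mulr_sumr -/F -/G -/C; ring.
  move=> i _; rewrite /F /G /C !mulr_sumr -!big_split -sumrB /=.
  by apply: eq_bigr => j _; ring.
have : 0 <= \sum_i \sum_j (f i * g j - f j * g i) ^+ 2.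
  by do 2 apply: sumr_ge0 => ? _; rewrite sqr_ge0.
by rewrite lagrange pmulr_rge0 // subr_ge0.
Qed.

Lemma dist_triangle (x y z : point) : dist x z <= dist x y + dist y z.
Proof.
pose f k := x ord0 k - y ord0 k; pose g k := y ord0 k - z ord0 k.
have expand : sqdist x z = sqdist x y + sqdist y z + 2 * \sum_k f k * g k.
  by rewrite /sqdist mulr_sumr -!big_split; apply: eq_bigr => k _; rewrite /= /f /g; ring.
have cross : \sum_k f k * g k <= dist x y * dist y z.
  rewrite -sqrtrM ?sqdist_ge0 //; apply: le_trans (ler_norm _) _.
  by rewrite -sqrtr_sqr ler_sqrt ?mulr_ge0 ?sqdist_ge0 ?cauchy_schwarz.
rewrite {1}/dist -/(sqdist x z).
rewrite -(ger0_norm (addr_ge0 (dist_ge0 x y) (dist_ge0 y z))) -sqrtr_sqr.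
by rewrite ler_sqrt ?sqr_ge0 // expand sqrrD !sqr_dist; lra.
Qed.

End Euclid.

Section Centroids.
Variables (R : realType) (m : nat).
Notation point := 'rV[R]_m.

Lemma sum_const_seq (T : Type) (A : seq T) (c : R) : \sum_(u <- A) c = (size A)%:R * c.
Proof. by rewrite big_const_seq count_predT -Monoid.iteropE /= mulr_natl. Qed.

Lemma size_neq0 (A : seq point) : A != [::] -> (size A)%:R != 0 :> R.
Proof. by rewrite pnatr_eq0 size_eq0. Qed.

Lemma centroidE (A : seq point) k :
  centroid A ord0 k = (size A)%:R^-1 * \sum_(u <- A) u ord0 k.
Proof. by rewrite /centroid mxE summxE. Qed.

Lemma centroid_perm (A B : seq point) : perm_eq A B -> centroid A = centroid B.
Proof. by move=> pAB; rewrite /centroid (perm_size pAB) (perm_big _ pAB). Qed.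

Lemma centroid_const (A : seq point) x :
  A != [::] -> (forall u, u \in A -> u = x) -> centroid A = x.
Proof.
move=> An Ax; apply/matrixP => i k; rewrite (ord1 i) centroidE.
rewrite (eq_big_seq (fun _ => x ord0 k)); last by move=> u /Ax ->.
by rewrite sum_const_seq mulrA mulVf ?size_neq0 // mul1r.
Qed.

Lemma parallel_axis (A : seq point) p : A != [::] ->
  \sum_(u <- A) sqdist u p =
  \sum_(u <- A) sqdist u (centroid A) + (size A)%:R * sqdist (centroid A) p.
Proof.
move=> An; rewrite /sqdist exchange_big mulr_sumr [X in _ = X + _]exchange_big.
rewrite -big_split; apply: eq_bigr => k _ /=; rewrite centroidE.
set n := (size A)%:R; set S := \sum_(u <- A) u ord0 k; set c := n^-1 * S.
have Sc : S = n * c by rewrite /c mulrA mulfV ?size_neq0 // mul1r.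
rewrite (eq_bigr (fun u : point => (u ord0 k - c) ^+ 2 +
                  ((c - p ord0 k) * 2 * u ord0 k - (c - p ord0 k) * (p ord0 k + c)))).
  by rewrite big_split /= sumrB -mulr_sumr -/S sum_const_seq Sc; ring.
by move=> u _; ring.
Qed.

Lemma Delta1E (A : seq point) : Delta1 A = \sum_(u <- A) sqdist u (centroid A).
Proof. by apply: eq_bigr => u _; rewrite sqr_dist. Qed.

Lemma Delta1_le (A : seq point) p : A != [::] -> Delta1 A <= \sum_(u <- A) sqdist u p.
Proof.
by move=> An; rewrite (parallel_axis p An) Delta1E lerDl mulr_ge0 ?sqdist_ge0.
Qed.

Lemma centroid_in_ball (A : seq point) x (r : R) : A != [::] ->
  (forall u, u \in A -> dist x u < r) -> dist x (centroid A) < r.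
Proof.
move=> An inball.
have [u uA] : exists u, u \in A by case: A An {inball} => // u A _; exists u; rewrite mem_head.
have r0 : 0 <= r by apply: le_trans (dist_ge0 x u) (ltW (inball u uA)).
have moment : \sum_(u <- A) sqdist u x < (size A)%:R * r ^+ 2.
  rewrite -sum_const_seq big_seq [X in _ < X]big_seq; apply: ltr_sum.
    by case: A An uA {inball} => //= a A _ _; rewrite inE eqxx.
  by move=> v vA; rewrite sqdistC -dist_lt // inball.
rewrite dist_lt // sqdistC -(ltr_pM2l (_ : 0 < (size A)%:R)); last first.
  by rewrite ltr0n lt0n size_eq0.
apply: le_lt_trans moment; rewrite (parallel_axis x An) lerDr.
by apply: sumr_ge0 => v _; rewrite sqdist_ge0.
Qed.

End Centroids.

Section Optimal2Means.
Variables (R : realType) (m : nat).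
Notation point := 'rV[R]_m.

Lemma optimal_2means_sym (S S1 S2 : seq point) :
  optimal_2means S S1 S2 -> optimal_2means S S2 S1.
Proof.
move=> [[pS [n1 n2]] opt]; split.
  by split => //; apply: perm_trans pS; rewrite perm_catC.
move=> A B [pAB [nA nB]]; rewrite addrC [X in _ <= X]addrC; apply: opt.
by split => //; apply: perm_trans pAB; rewrite perm_catC.
Qed.

(* The centroid of M ++ K is the |M|:|K| weighted mean of the centroids of M
   and K, so their offsets from it are inversely proportional to the sizes. *)
Lemma centroid_balance (M K : seq point) : M != [::] -> K != [::] ->
  (size K)%:R ^+ 2 * sqdist (centroid K) (centroid (M ++ K)) =
  (size M)%:R ^+ 2 * sqdist (centroid M) (centroid (M ++ K)) :> R.
Proof.
move=> Mn Kn; have nM := size_neq0 Mn; have nK := size_neq0 Kn.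
have nMK : (size M)%:R + (size K)%:R != 0 :> R.
  by rewrite -natrD -size_cat size_neq0 // -size_eq0 size_cat addn_eq0 size_eq0 negb_and Mn.
rewrite /sqdist !mulr_sumr; apply: eq_bigr => k _.
rewrite !centroidE size_cat big_cat natrD /=; field.
by rewrite nMK nM nK.
Qed.

(* Comparing (S1, S2) with the partition obtained by moving a part M of S1
   over to S2 (S1 = M + K): the cost saved on K is paid back on M. *)
Lemma move_cost (S S1 S2 M K : seq point) : optimal_2means S S1 S2 ->
  perm_eq (M ++ K) S1 -> M != [::] -> K != [::] ->
  (size K)%:R * sqdist (centroid K) (centroid S1) +
  (size M)%:R * sqdist (centroid M) (centroid S1) <=
  (size M)%:R * sqdist (centroid M) (centroid S2).
Proof.
move=> [[pS [S1n S2n]] opt] pMK Mn Kn.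
have moved : is_2partition S K (S2 ++ M).
  split; last by split => //; case: (S2) S2n.
  apply: perm_trans pS; apply: (@perm_trans _ (M ++ (K ++ S2))).
    by rewrite catA perm_catC.
  by rewrite catA perm_cat2r.
have cost1 : Delta1 S1 = \sum_(u <- M) sqdist u (centroid S1) +
                         \sum_(u <- K) sqdist u (centroid S1).
  by rewrite Delta1E -(perm_big _ pMK) big_cat.
have cost2 : Delta1 (S2 ++ M) <= Delta1 S2 + \sum_(u <- M) sqdist u (centroid S2).
  apply: le_trans (Delta1_le (centroid S2) _) _; first by case: (S2) S2n.
  by rewrite big_cat Delta1E.
have := opt K (S2 ++ M) moved.
rewrite cost1 (parallel_axis _ Mn) (parallel_axis _ Kn) -!Delta1E.
move: cost2; rewrite (parallel_axis _ Mn) -!Delta1E; lra.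
Qed.

Lemma move_subcluster (S S1 S2 M K : seq point) : optimal_2means S S1 S2 ->
  perm_eq (M ++ K) S1 -> M != [::] ->
  (size S1)%:R * sqdist (centroid M) (centroid S1) <=
  (size K)%:R * sqdist (centroid M) (centroid S2).
Proof.
move=> opt pMK Mn.
have [Ke | Kn] := eqVneq K [::].
  move: pMK; rewrite Ke cats0 => /centroid_perm <-.
  by rewrite sqdistxx mulr0 mulr_ge0 ?sqdist_ge0.
have cost := move_cost opt pMK Mn Kn.
have balance := centroid_balance Mn Kn; rewrite (centroid_perm pMK) in balance.
rewrite -(perm_size pMK) size_cat natrD.
have kM : 0 < (size M)%:R :> R by rewrite ltr0n lt0n size_eq0.
have kK : 0 < (size K)%:R :> R by rewrite ltr0n lt0n size_eq0.
set k := (size M)%:R in cost balance kM *; set l := (size K)%:R in cost balance kK *.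
set X := sqdist (centroid K) _ in cost balance.
set Y := sqdist (centroid M) (centroid S1) in cost balance *.
set Z := sqdist (centroid M) (centroid S2) in cost *.
rewrite -(ler_pM2l kM); nra.
Qed.

Lemma voronoi (S S1 S2 : seq point) x : optimal_2means S S1 S2 -> x \in S1 ->
  dist x (centroid S1) <= dist x (centroid S2).
Proof.
move=> opt xS1; set M := filter (pred1 x) S1; set K := filter (predC (pred1 x)) S1.
have Mn : M != [::].
  by rewrite -size_eq0 size_filter -lt0n -has_count; apply/hasP; exists x => /=.
have cM : centroid M = x.
  by apply: centroid_const => // u; rewrite mem_filter => /andP[/eqP].
have pMK : perm_eq (M ++ K) S1 by rewrite perm_filterC.
have moved := move_subcluster opt pMK Mn; rewrite cM in moved.
have sK : (size K)%:R <= (size S1)%:R :> R by rewrite ler_nat size_filter count_size.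
have s0 : 0 < (size S1)%:R :> R by rewrite ltr0n lt0n size_eq0; case: (S1) xS1.
rewrite /dist ler_sqrt ?sqdist_ge0 // -(ler_pM2l s0); apply: le_trans moved _.
by rewrite ler_wpM2r ?sqdist_ge0.
Qed.

End Optimal2Means.

Section NearPoints.
Variables (R : realType) (m : nat) (gamma : R).
Hypotheses (gamma_gt0 : 0 < gamma) (gamma_le1 : gamma <= 1).
Notation point := 'rV[R]_m.

(* The fraction 4 gamma / (1 + gamma)^2 of a cluster that can be gamma-close
   to a point of the other cluster; it is 40/121 for gamma = 1/10. *)
Definition near_ratio : R := 4%:R * gamma / (1 + gamma) ^+ 2.

Lemma near_ratio_ge0 : 0 <= near_ratio.
Proof. by rewrite divr_ge0 ?sqr_ge0 // mulr_ge0 // ltW. Qed.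

(* The arithmetic core of the counting bound: if k + l points sit at distance
   >= (1 - gamma) a from one centre and l of them would be at distance
   <= (1 + gamma) a from the other, the moving inequality bounds k. *)
Lemma near_ratio_bound (k l a u v : R) : 0 <= k -> 0 <= l -> 0 < a -> 0 <= v ->
  (1 - gamma) * a <= u -> v <= (1 + gamma) * a ->
  (k + l) * u ^+ 2 <= l * v ^+ 2 -> k <= near_ratio * (k + l).
Proof.
move=> k0 l0 a0 v0 far near moving.
have scaled : (k + l) * ((1 - gamma) * a) ^+ 2 <= l * ((1 + gamma) * a) ^+ 2.
  apply: le_trans (_ : (k + l) * u ^+ 2 <= _).
    by apply: ler_wpM2l; rewrite ?addr_ge0 // sqr_le // mulr_ge0 ?subr_ge0 // ltW.
  apply: (le_trans moving); apply: ler_wpM2l => //.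
  by rewrite sqr_le.
have weighted : k * (1 + gamma) ^+ 2 <= 4%:R * gamma * (k + l).
  move: scaled; rewrite !exprMn (mulrA (k + l)) (mulrA l) ler_pM2r ?exprn_gt0 //.
  rewrite -subr_ge0 => scaled; rewrite -subr_ge0.
  by have <- : l * (1 + gamma) ^+ 2 - (k + l) * (1 - gamma) ^+ 2 =
               4%:R * gamma * (k + l) - k * (1 + gamma) ^+ 2 by ring.
rewrite /near_ratio -mulrA (mulrC _ (k + l)) mulrA ler_pdivlMr //.
by rewrite exprn_gt0 // addr_gt0.
Qed.

(* For x in the cluster S1 of an optimal 2-means partition, few points of
   S2 are within gamma d(x, c1) of x: their centroid mu is then close to x,
   hence close to c1 and far from c2, so moving them to S1 would pay off. *)
Lemma near_count (S S1 S2 : seq point) x : optimal_2means S S1 S2 -> x \in S1 ->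
  (size (filter (fun y => dist x y < gamma * dist x (centroid S1)) S2))%:R
  <= near_ratio * (size S2)%:R.
Proof.
move=> opt xS1; set a := dist x (centroid S1); set P := (fun y => _).
set M := filter P S2; set K := filter (predC P) S2.
have [-> | Mn] := eqVneq M [::]; first by rewrite mulr_ge0 ?near_ratio_ge0.
have pMK : perm_eq (M ++ K) S2 by rewrite perm_filterC.
set mu := centroid M.
have mu_near : dist x mu < gamma * a.
  by apply: centroid_in_ball => // y; rewrite mem_filter => /andP[].
have a_gt0 : 0 < a.
  by rewrite -(pmulr_rgt0 _ gamma_gt0); apply: le_lt_trans (dist_ge0 x mu) mu_near.
have far_c2 : (1 - gamma) * a <= dist mu (centroid S2).
  have := voronoi opt xS1; have := dist_triangle x mu (centroid S2); rewrite -/a; lra.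
have near_c1 : dist mu (centroid S1) <= (1 + gamma) * a.
  have := dist_triangle mu x (centroid S1); rewrite (distC mu x) -/a; lra.
have moving := move_subcluster (optimal_2means_sym opt) pMK Mn.
rewrite -!sqr_dist -(perm_size pMK) size_cat natrD in moving.
rewrite -(perm_size pMK) size_cat natrD.
exact: near_ratio_bound a_gt0 (dist_ge0 _ _) far_c2 near_c1 moving.
Qed.

End NearPoints.

Section SplitRevenue.
Variables (R : realType) (m : nat) (gamma : R).
Hypotheses (gamma_gt0 : 0 < gamma) (gamma_le1 : gamma <= 1).
Notation point := 'rV[R]_m.

Definition indicator (b : bool) : R := (b : nat)%:R.

Lemma sum_indicator (s : seq point) (P : pred point) :
  \sum_(j <- s) indicator (P j) = (size (filter P s))%:R.
Proof.
rewrite size_filter -sum1_count natr_sum [RHS]big_mkcond.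
by apply: eq_bigr => j _; case: (P j).
Qed.

Lemma rev_pair_ge0 (S1 S2 : seq point) i j : 0 <= rev_pair S1 S2 i j.
Proof.
rewrite /rev_pair; case: ifP => // _.
by rewrite le_min ler01 andbT divr_ge0 ?dist_ge0 // le_max dist_ge0.
Qed.

Lemma rev_pair_le1 (S1 S2 : seq point) i j : rev_pair S1 S2 i j <= 1.
Proof. by rewrite /rev_pair; case: ifP => // _; rewrite ge_min lexx orbT. Qed.

Lemma rev_pair_lb (S1 S2 : seq point) i j :
  gamma * (1 - indicator (dist i j < gamma * dist i (centroid S1))
             - indicator (dist i j < gamma * dist j (centroid S2)))
  <= rev_pair S1 S2 i j.
Proof.
rewrite /indicator; case: ltP => hA; case: ltP => hB /=;
  rewrite ?mulr1n ?mulr0n ?subr0;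
  try by apply: le_trans (rev_pair_ge0 _ _ _ _); rewrite pmulr_rle0 //; lra.
rewrite mulr1 /rev_pair; case: eqP => [_ | delta_neq0] //.
have delta_gt0 : 0 < Num.max (dist i (centroid S1)) (dist j (centroid S2)).
  by rewrite lt_neqAle eq_sym; apply/andP; split; [apply/eqP | rewrite le_max dist_ge0].
by rewrite le_min gamma_le1 andbT ler_pdivlMr // maxr_pMr ?ge_max ?hA ?hB // ltW.
Qed.

Lemma sum_sub2 (s : seq point) (c : R) (F G : point -> R) :
  \sum_(u <- s) (c - F u - G u) =
  (size s)%:R * c - \sum_(u <- s) F u - \sum_(u <- s) G u.
Proof. by rewrite !sumrB sum_const_seq. Qed.

Lemma rev_split_lb (S S1 S2 : seq point) : optimal_2means S S1 S2 ->
  gamma * (1 - 2%:R * near_ratio gamma) * ((size S1)%:R * (size S2)%:R)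
  <= rev_split S1 S2.
Proof.
move=> opt; set n1 := (size S1)%:R; set n2 := (size S2)%:R; set r := near_ratio gamma.
set A := fun i j => indicator (dist i j < gamma * dist i (centroid S1)).
set B := fun i j => indicator (dist i j < gamma * dist j (centroid S2)).
have rows : \sum_(i <- S1) \sum_(j <- S2) A i j <= r * (n1 * n2).
  rewrite mulrCA -sum_const_seq big_seq [X in _ <= X]big_seq; apply: ler_sum => i iS1.
  by rewrite sum_indicator (near_count gamma_gt0 gamma_le1 opt iS1).
have cols : \sum_(i <- S1) \sum_(j <- S2) B i j <= r * (n1 * n2).
  rewrite exchange_big (mulrC n1) mulrCA -sum_const_seq big_seq [X in _ <= X]big_seq.
  apply: ler_sum => j jS2; under eq_bigr do rewrite /B distC.
  by rewrite sum_indicator (near_count gamma_gt0 gamma_le1 (optimal_2means_sym opt) jS2).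
apply: le_trans (_ : \sum_(i <- S1) \sum_(j <- S2) gamma * (1 - A i j - B i j) <= _).
  rewrite (eq_bigr (fun i => gamma * (n2 - \sum_(j <- S2) A i j - \sum_(j <- S2) B i j))).
    rewrite -mulr_sumr sum_sub2 -/n1 -mulrA; apply: ler_wpM2l; first exact: ltW.
    by move: rows cols; lra.
  by move=> i _; rewrite -mulr_sumr sum_sub2 mulr1.
by apply: ler_sum => i _; apply: ler_sum => j _; apply: rev_pair_lb.
Qed.

Lemma rev_split_le (S1 S2 : seq point) :
  rev_split S1 S2 <= (size S1)%:R * (size S2)%:R.
Proof.
rewrite /rev_split -sum_const_seq; apply: ler_sum => i _.
rewrite -[X in _ <= X]mulr1 -sum_const_seq; apply: ler_sum => j _; exact: rev_pair_le1.
Qed.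

End SplitRevenue.

Section TreeRevenue.
Variables (R : realType) (m : nat).
Notation point := 'rV[R]_m.

Definition npairs (n : nat) : R := n%:R * (n%:R - 1) / 2%:R.

Lemma npairs_ge0 n : 0 <= npairs n.
Proof.
rewrite /npairs divr_ge0 //; case: n => [|n]; first by rewrite mul0r.
by rewrite mulr_ge0 // -natr1 addrK.
Qed.

Lemma npairsD n1 n2 : npairs (n1 + n2) = n1%:R * n2%:R + npairs n1 + npairs n2.
Proof. by rewrite /npairs natrD; field. Qed.

(* Each pair of leaves is separated at exactly one split and earns at most 1. *)
Lemma hrev_le_npairs (t : htree R m) : hrev t <= npairs (size (leaves t)).
Proof.
elim: t => [x | l IHl r IHr] /=; first by rewrite /npairs subrr mulr0 mul0r.
by rewrite size_cat npairsD; have := rev_split_le (leaves l) (leaves r); lra.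
Qed.

Lemma hrev_ge_npairs (c : R) (t : htree R m) :
  (forall S S1 S2 : seq point, optimal_2means S S1 S2 ->
     c * ((size S1)%:R * (size S2)%:R) <= rev_split S1 S2) ->
  bisecting_kmeans_tree t -> c * npairs (size (leaves t)) <= hrev t.
Proof.
move=> split_lb; elim: t => [x | l IHl r IHr] /=.
  by rewrite /npairs subrr mulr0 mul0r mulr0.
move=> [opt [bl br]]; rewrite size_cat npairsD !mulrDr.
by apply: lerD; [apply: lerD; [exact: split_lb opt | exact: IHl] | exact: IHr].
Qed.

End TreeRevenue.

Lemma revenue_constant_tenth (R : realType) :
  (35%:R)^-1 <= (10%:R)^-1 * (1 - 2%:R * near_ratio (10%:R)^-1) :> R.
Proof.
have -> : (10%:R)^-1 * (1 - 2%:R * near_ratio (10%:R)^-1) = 41%:R / 1210%:R :> R.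
  by rewrite /near_ratio; field.
lra.
Qed.

Unset Implicit Arguments.

Theorem mainTheorem1 (R : realType) (m : nat) (V : seq 'rV[R]_m)
  (T : htree R m) :
  uniq V -> (2 <= size V)%N ->
  is_hc_tree V T -> bisecting_kmeans_tree T ->
  forall T' : htree R m, is_hc_tree V T' ->
    (35%:R)^-1 * hrev T' <= hrev T.
Proof.
move=> _ _ hT bT T' hT'.
have gamma_gt0 : 0 < (10%:R)^-1 :> R by rewrite invr_gt0 ltr0n.
have gamma_le1 : (10%:R)^-1 <= 1 :> R by rewrite invf_le1 ?ler1n ?ltr0n.
have lb := hrev_ge_npairs (rev_split_lb gamma_gt0 gamma_le1) bT.
have ub := hrev_le_npairs T'.
rewrite (perm_size hT) in lb; rewrite (perm_size hT') in ub.
apply: le_trans (ler_wpM2l _ ub) _; first by rewrite invr_ge0.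
apply: le_trans lb; apply: ler_wpM2r; [exact: npairs_ge0 | exact: revenue_constant_tenth].
Qed.
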